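(* Let $D$ and $X$ be real vector spaces, let $M(\cdot,\cdot)$ and $N(\cdot,\cdot)$ be symmetric bilinear forms on $D$ with $M$ positive definite, let $b_G(\cdot,\cdot)$ be a symmetric positive semidefinite bilinear form on $X$, and let $T:D\to X$ be linear with $b_G(Tu,Tv)=M(u,v)$ for all $u,v\in D$. Let $v_1,\dots,v_n\in D$ and $w_1,\dots,w_n\in X$ satisfy $b_G(w_i,T\phi)=N(v_i,\phi)$ for all $\phi\in D$, $i=1,\dots,n$. Assume that for every $v\in\operatorname{span}\{v_1,\dots,v_n\}$ there exists $\tilde u\in D$ with $M(\tilde u,\phi)=N(v,\phi)$ for all $\phi\in D$. Define the $n\times n$ matrices $$A_0=(M(v_i,v_j))_{i,j},\quad A_1=(N(v_i,v_j))_{i,j},\quad A_2=(b_G(w_i,w_j))_{i,j},$$ assume $A_1$ is positive definite, and let $\Lambda_n$ be the largest eigenvalue of $A_0x=\Lambda A_1x$. If $\rho>\Lambda_n$ and $\rho>0$, then the matrix $B:=A_0-2\rho A_1+\rho^2A_2$ is positive definite. *)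

From HB Require Import structures.
From mathcomp Require Import all_boot all_order all_algebra.
From mathcomp Require Import reals.
Set Implicit Arguments. Unset Strict Implicit. Unset Printing Implicit Defensive.
Import Order.TTheory GRing.Theory Num.Theory.
Local Open Scope ring_scope.

(* A real-valued form on V that is symmetric and linear in its first
   argument (hence bilinear). *)
Definition sym_bilinear_form (R : realType) (V : lmodType R) (B : V -> V -> R) :=
  (forall u v, B u v = B v u) /\
  (forall (a : R) (u v w : V), B (a *: u + v) w = a * B u w + B v w).

Definition posdef_form (R : realType) (V : lmodType R) (B : V -> V -> R) :=
  forall u : V, u != 0 -> 0 < B u u.

Definition possemidef_form (R : realType) (V : lmodType R) (B : V -> V -> R) :=
  forall u : V, 0 <= B u u.

Definition posdef_mx (R : realType) (n : nat) (A : 'M[R]_n) :=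
  A^T = A /\ forall x : 'cV[R]_n, x != 0 -> 0 < (x^T *m A *m x) 0 0.

Definition gen_eigenvalue (R : realType) (n : nat) (A0 A1 : 'M[R]_n) (Lam : R) :=
  exists x : 'cV[R]_n, x != 0 /\ A0 *m x = Lam *: (A1 *m x).

Definition largest_gen_eigenvalue (R : realType) (n : nat) (A0 A1 : 'M[R]_n) (Lam : R) :=
  gen_eigenvalue A0 A1 Lam /\ forall mu, gen_eigenvalue A0 A1 mu -> mu <= Lam.

(* Put [vv := sum_i x_i v_i] and [ww := sum_i x_i w_i], and let [u] be the
   representer of [N vv] for [M].  Since [bG(ww, T phi) = M(u, phi)], expanding
   [bG(ww - T u, ww - T u) >= 0] gives [M(u, u) <= bG(ww, ww)], so the quadratic
   form of [B] at [x] is at least [M(vv - rho u, vv - rho u) >= 0].  Equality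
   forces [vv = rho u], which makes [rho] a generalized eigenvalue with
   eigenvector [x], contradicting [rho > Lam]. *)
From HB Require Import structures.
From mathcomp Require Import all_boot all_order all_algebra.
From mathcomp Require Import reals.
From mathcomp Require Import lra.
Set Implicit Arguments. Unset Strict Implicit. Unset Printing Implicit Defensive.
Import Order.TTheory GRing.Theory Num.Theory.
Local Open Scope ring_scope.

Section SymBilinearForm.
Variables (R : realType) (V : lmodType R) (B : V -> V -> R).
Hypothesis hB : sym_bilinear_form B.

Lemma formC u v : B u v = B v u.
Proof. exact: hB.1. Qed.

Lemma form0l w : B 0 w = 0.
Proof.
have := hB.2 1 0 0 w; rewrite scale1r addr0 mul1r => h.
by apply: (addrI (B 0 w)); rewrite addr0 -h.
Qed.

Lemma formDl u v w : B (u + v) w = B u w + B v w.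
Proof. by have := hB.2 1 u v w; rewrite scale1r mul1r. Qed.

Lemma formZl a u w : B (a *: u) w = a * B u w.
Proof. by have := hB.2 a u 0 w; rewrite addr0 form0l addr0. Qed.

Lemma formBl u v w : B (u - v) w = B u w - B v w.
Proof. by rewrite formDl -scaleN1r formZl mulN1r. Qed.

Lemma formZr a u w : B w (a *: u) = a * B w u.
Proof. by rewrite formC formZl formC. Qed.

Lemma formBr u v w : B w (u - v) = B w u - B w v.
Proof. by rewrite formC formBl !(formC w). Qed.

Lemma form_suml n (c : 'I_n -> R) (u : 'I_n -> V) y :
  B (\sum_(i < n) c i *: u i) y = \sum_(i < n) c i * B (u i) y.
Proof.
elim/big_rec2: _ => [|i a b _ <-]; first exact: form0l.
by rewrite formDl formZl.
Qed.

Lemma form_sumr n (c : 'I_n -> R) (u : 'I_n -> V) y :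
  B y (\sum_(i < n) c i *: u i) = \sum_(i < n) c i * B y (u i).
Proof. by rewrite formC form_suml; apply: eq_bigr => i _; rewrite formC. Qed.

Lemma gram_mulmx n (u : 'I_n -> V) (x : 'cV[R]_n) i :
  ((\matrix_(i < n, j < n) B (u i) (u j)) *m x) i 0 =
  B (u i) (\sum_(j < n) x j 0 *: u j).
Proof. by rewrite mxE form_sumr; apply: eq_bigr => j _; rewrite mxE mulrC. Qed.

Lemma gram_quad_form n (u : 'I_n -> V) (x : 'cV[R]_n) :
  (x^T *m (\matrix_(i < n, j < n) B (u i) (u j)) *m x) 0 0 =
  B (\sum_(i < n) x i 0 *: u i) (\sum_(i < n) x i 0 *: u i).
Proof.
rewrite mxE form_suml; apply: eq_bigr => j _.
rewrite mxE form_sumr mulrC; congr (_ * _).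
by apply: eq_bigr => i _; rewrite !mxE formC.
Qed.

End SymBilinearForm.

Section QuadForm.
Variables (R : realType) (n : nat) (x : 'cV[R]_n).

Lemma quad_formD (A B : 'M[R]_n) :
  (x^T *m (A + B) *m x) 0 0 = (x^T *m A *m x) 0 0 + (x^T *m B *m x) 0 0.
Proof. by rewrite mulmxDr mulmxDl [LHS]mxE. Qed.

Lemma quad_formB (A B : 'M[R]_n) :
  (x^T *m (A - B) *m x) 0 0 = (x^T *m A *m x) 0 0 - (x^T *m B *m x) 0 0.
Proof. by rewrite mulmxBr mulmxBl [LHS]mxE [X in _ + X]mxE. Qed.

Lemma quad_formZ k (A : 'M[R]_n) :
  (x^T *m (k *: A) *m x) 0 0 = k * (x^T *m A *m x) 0 0.
Proof. by rewrite -scalemxAr -scalemxAl [LHS]mxE. Qed.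

End QuadForm.

Section Isometry.
Variables (R : realType) (D X : lmodType R) (M : D -> D -> R) (bG : X -> X -> R).
Variable T : D -> X.
Hypothesis hbG : sym_bilinear_form bG.
Hypothesis bG_psd : possemidef_form bG.
Hypothesis isoT : forall x y : D, bG (T x) (T y) = M x y.

(* [T u] is the orthogonal projection of [w] onto the image of [T]. *)
Lemma isometry_representer_le w u :
  (forall phi, bG w (T phi) = M u phi) -> M u u <= bG w w.
Proof.
move=> hwu; have := bG_psd (w - T u).
rewrite formBl // !formBr // hwu isoT (formC hbG (T u)) hwu; lra.
Qed.

End Isometry.

Lemma representer_shift (R : realType) (D : lmodType R) (M N : D -> D -> R)
    (v u : D) (rho : R) :
  sym_bilinear_form M -> (forall phi, M u phi = N v phi) ->
  M (v - rho *: u) (v - rho *: u) = M v v - 2 * rho * N v v + rho ^+ 2 * M u u.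
Proof.
move=> hM hu.
rewrite formBl // !formBr // !formZl // !formZr // -hu (formC hM v u); lra.
Qed.

Theorem lemma4p3 (R : realType) (D X : lmodType R)
  (M N : D -> D -> R) (bG : X -> X -> R) (T : D -> X)
  (n : nat) (v : 'I_n -> D) (w : 'I_n -> X) (Lam rho : R) :
  sym_bilinear_form M -> sym_bilinear_form N -> posdef_form M ->
  sym_bilinear_form bG -> possemidef_form bG ->
  (forall (a : R) (x y : D), T (a *: x + y) = a *: T x + T y) ->
  (forall x y : D, bG (T x) (T y) = M x y) ->
  (forall (i : 'I_n) (phi : D), bG (w i) (T phi) = N (v i) phi) ->
  (forall c : 'I_n -> R, exists ut : D,
     forall phi : D, M ut phi = N (\sum_(i < n) c i *: v i) phi) ->
  posdef_mx (\matrix_(i < n, j < n) N (v i) (v j)) ->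
  largest_gen_eigenvalue (\matrix_(i < n, j < n) M (v i) (v j))
                         (\matrix_(i < n, j < n) N (v i) (v j)) Lam ->
  Lam < rho -> 0 < rho ->
  posdef_mx ((\matrix_(i < n, j < n) M (v i) (v j))
             - (2 * rho) *: (\matrix_(i < n, j < n) N (v i) (v j))
             + (rho ^+ 2) *: (\matrix_(i < n, j < n) bG (w i) (w j))).
Proof.
move=> hM hN M_pd hbG bG_psd _ isoT hw representer _ [_ Lam_max] Lam_lt_rho _.
split; first by apply/matrixP => i j; rewrite !mxE (formC hM) (formC hN) (formC hbG).
move=> x x_neq0; rewrite quad_formD quad_formB !quad_formZ !gram_quad_form //.
set vv := \sum_(i < n) x i 0 *: v i; set ww := \sum_(i < n) x i 0 *: w i.
have [u hu] := representer (fun i => x i 0).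
have hwu phi : bG ww (T phi) = M u phi.
  by rewrite hu !form_suml //; apply: eq_bigr => i _; rewrite hw.
have Mu_le := isometry_representer_le hbG bG_psd isoT hwu.
have [vv_eq|vv_neq] := eqVneq (vv - rho *: u) 0.
  suff : rho <= Lam by rewrite leNgt Lam_lt_rho.
  apply: Lam_max; exists x; split => //; apply/matrixP => i j.
  rewrite (ord1 j) [RHS]mxE !gram_mulmx // -/vv.
  have vv_rho : vv = rho *: u by apply/eqP; rewrite -subr_eq0 vv_eq.
  by rewrite {1}vv_rho formZr // (formC hM) hu (formC hN).
have := M_pd _ vv_neq; rewrite (representer_shift rho hM hu).
have : rho ^+ 2 * M u u <= rho ^+ 2 * bG ww ww by rewrite ler_wpM2l ?sqr_ge0.
lra.
Qed.
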